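(* Let $(M,J,g)$ be a quasi-K\''ahler manifold with Norden metric and let $\nabla'$ be the connection with totally skew-symmetric torsion $\nabla'_xy=\nabla_xy+Q(x,y)$, where $Q(x,y)=\frac14\{(\nabla_xJ)Jy-(\nabla_{Jx}J)y-2(\nabla_yJ)Jx\}$. Suppose the torsion of $\nabla'$ is parallel with respect to $\nabla'$ and the curvature tensor $R'$ of $\nabla'$ is a K\''ahler tensor. Then $$R'(x,y,z,w)=R(x,y,z,w)+g\bigl(Q(x,y),Q(z,w)\bigr)$$ for all vector fields $x,y,z,w$.
   Context: An almost complex manifold with Norden metric $(M,J,g)$ has $J^2=-\mathrm{Id}$, $g(Jx,Jy)=-g(x,y)$; $\nabla$ is the Levi-Civita connection of $g$, $F(x,y,z)=g((\nabla_xJ)y,z)$, and the manifold is quasi-K\''ahler if $F(x,y,z)+F(y,z,x)+F(z,x,y)=0$. The torsion of $\nabla'$ is $T(x,y)=\nabla'_xy-\nabla'_yx-[x,y]$. For a connection $D$, $R^D(x,y)z=D_xD_yz-D_yD_xz-D_{[x,y]}z$ and $R^D(x,y,z,w)=g(R^D(x,y)z,w)$; $R$ is the curvature of $\nabla$ and $R'$ that of $\nabla'$. A $(0,4)$-tensor $L$ is a K\''ahler tensor if $L(x,y,z,w)=-L(y,x,z,w)=-L(x,y,w,z)$, $L(x,y,z,w)+L(y,z,x,w)+L(z,x,y,w)=0$, and $L(x,y,Jz,Jw)=-L(x,y,z,w)$. *)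

(* Algebraic (Lie--Rinehart) model of a smooth manifold:
   C  = algebra of smooth real functions (a commutative R-algebra) /\
   V  = C-module of vector fields,
   der x f  = x(f) (action of vector fields on functions) /\
   br x y   = Lie bracket [x,y]. *)
From HB Require Import structures.
From mathcomp Require Import all_boot all_order all_algebra.
From mathcomp Require Import reals.
Set Implicit Arguments. Unset Strict Implicit. Unset Printing Implicit Defensive.
Import Order.TTheory GRing.Theory Num.Theory.
Local Open Scope ring_scope.

Section Geometry.
Variables (R : realType) (C : comAlgType R) (V : lmodType C).

Definition rsc (r : R) (v : V) : V := (r%:A : C) *: v.

Definition is_vector_fields (der : V -> C -> C) (br : V -> V -> V) : Prop :=
  ((forall x (a : R) f h, der x (a *: f + h) = a *: der x f + der x h) /\
      (forall x f h, der x (f * h) = f * der x h + h * der x f) /\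
      (forall (a : C) x y f, der (a *: x + y) f = a * der x f + der y f) /\
      (forall x y f, der (br x y) f = der x (der y f) - der y (der x f)) /\
      (forall x (a : R) y z, br x (rsc a y + z) = rsc a (br x y) + br x z) /\
      (forall x y, br x y = - br y x) /\
      (forall x y z, br x (br y z) + br y (br z x) + br z (br x y) = 0)
    /\ (forall x (f : C) y, br x (f *: y) = f *: br x y + der x f *: y)).

Definition is_metric (g : V -> V -> C) : Prop :=
  ((forall x y, g x y = g y x) /\
      (forall (a : C) x y z, g (a *: x + y) z = a * g x z + g y z)
    /\ (forall x, (forall y, g x y = 0) -> x = 0)).

Definition is_Norden (J : V -> V) (g : V -> V -> C) : Prop :=
  ((forall (a : C) x y, J (a *: x + y) = a *: J x + J y) /\
      (forall x, J (J x) = - x)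
    /\ (forall x y, g (J x) (J y) = - g x y)).

Definition is_connection (der : V -> C -> C) (D : V -> V -> V) : Prop :=
  ((forall (a : C) x y z, D (a *: x + y) z = a *: D x z + D y z) /\
      (forall x y z, D x (y + z) = D x y + D x z)
    /\ (forall x (f : C) y, D x (f *: y) = f *: D x y + der x f *: y)).

Definition is_LeviCivita (der : V -> C -> C) (br : V -> V -> V)
  (g : V -> V -> C) (nabla : V -> V -> V) : Prop :=
  (is_connection der nabla /\
      (forall x y, nabla x y - nabla y x = br x y)
    /\ (forall x y z, der x (g y z) = g (nabla x y) z + g y (nabla x z))).

Definition nablaJ (J : V -> V) (nabla : V -> V -> V) (x y : V) : V :=
  nabla x (J y) - J (nabla x y).

Definition Ften (g : V -> V -> C) (J : V -> V) (nabla : V -> V -> V)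
  (x y z : V) : C := g (nablaJ J nabla x y) z.

Definition quasi_Kaehler (g : V -> V -> C) (J : V -> V) (nabla : V -> V -> V)
  : Prop :=
  forall x y z, Ften g J nabla x y z + Ften g J nabla y z x
                + Ften g J nabla z x y = 0.

Definition Qten (J : V -> V) (nabla : V -> V -> V) (x y : V) : V :=
  rsc (4%:R^-1) (nablaJ J nabla x (J y) - nablaJ J nabla (J x) y
                 - rsc 2%:R (nablaJ J nabla y (J x))).

Definition nablap (J : V -> V) (nabla : V -> V -> V) (x y : V) : V :=
  nabla x y + Qten J nabla x y.

Definition torsion (br : V -> V -> V) (D : V -> V -> V) (x y : V) : V :=
  D x y - D y x - br x y.

Definition torsion_parallel (br : V -> V -> V) (D : V -> V -> V) : Prop :=
  forall x y z,
    D x (torsion br D y z) - torsion br D (D x y) z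
    - torsion br D y (D x z) = 0.

Definition curv (br : V -> V -> V) (D : V -> V -> V) (x y z : V) : V :=
  D x (D y z) - D y (D x z) - D (br x y) z.

Definition curv4 (br : V -> V -> V) (g : V -> V -> C) (D : V -> V -> V)
  (x y z w : V) : C := g (curv br D x y z) w.

Definition Kaehler_tensor (J : V -> V) (L : V -> V -> V -> V -> C) : Prop :=
  (forall x y z w, L x y z w = - L y x z w) /\
  (forall x y z w, L x y z w = - L x y w z) /\
  (forall x y z w, L x y z w + L y z x w + L z x y w = 0) /\
  (forall x y z w, L x y (J z) (J w) = - L x y z w).

End Geometry.

From HB Require Import structures.
From mathcomp Require Import all_boot all_order all_algebra.
From mathcomp Require Import reals ring.
Set Implicit Arguments. Unset Strict Implicit. Unset Printing Implicit Defensive.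
Import Order.TTheory GRing.Theory Num.Theory.
Local Open Scope ring_scope.

(* The quasi-Kaehler condition makes g(Q(x,y),z) totally skew-symmetric, so
   nabla' = nabla + Q is a metric connection whose torsion is 2Q.  Parallelism of
   this torsion expresses nabla Q through Q o Q, and the curvature of nabla + Q
   becomes  R'(x,y,z,w) = R(x,y,z,w) + 2 g(Q(x,y),Q(z,w)) - g(Q(x,z),Q(y,w))
   + g(Q(y,z),Q(x,w)).  Both R (torsion-free) and R' (a Kaehler tensor) satisfy
   the first Bianchi identity; the cyclic sum over (x,y,z) of this formula then
   gives 4 times the cyclic sum of g(Q(x,y),Q(z,w)), which therefore vanishes
   and reduces the formula to the claimed one. *)

Lemma morph_add0 (U W : zmodType) (f : U -> W) : {morph f : a b / a + b} -> f 0 = 0.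
Proof. by move=> fD; apply: (addrI (f 0)); rewrite -fD !addr0. Qed.

Lemma morph_addN (U W : zmodType) (f : U -> W) :
  {morph f : a b / a + b} -> forall a, f (- a) = - f a.
Proof. by move=> fD a; apply: (addrI (f a)); rewrite -fD !subrr (morph_add0 fD). Qed.

Lemma bimorphNl (U W : zmodType) (f : U -> U -> W) :
  (forall x y z, f (x + y) z = f x z + f y z) -> forall x z, f (- x) z = - f x z.
Proof. by move=> fD x z; apply: (morph_addN (f := f^~ z)) => a b; apply: fD. Qed.

Lemma bimorphNr (U W : zmodType) (f : U -> U -> W) :
  (forall x y z, f x (y + z) = f x y + f x z) -> forall x z, f x (- z) = - f x z.
Proof. by move=> fD x z; apply: (bimorphNl (f := fun z x => f x z)) => ? ? ?; apply: fD. Qed.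

Lemma lmod_natmul_eq0 (R : numFieldType) (W : lmodType R) (v : W) n :
  v *+ n.+1 = 0 -> v = 0.
Proof.
move=> vn0; rewrite -[v]scale1r.
have -> : (1 : R) = n.+1%:R^-1 *+ n.+1 by rewrite -[RHS]mulr_natr mulVf ?pnatr_eq0.
by rewrite -scalerMnl scalerMnr vn0 scaler0.
Qed.

Ltac ring_from E :=
  match type of E with ?e1 = ?e2 => transitivity (e1 - e2); [ring | by rewrite E subrr] end.

Definition deform (V : zmodType) (nab Q : V -> V -> V) (x y : V) : V :=
  nab x y + Q x y.

Section Metric.
Variables (R : realType) (C : comAlgType R) (V : lmodType C) (g : V -> V -> C).
Hypotheses (gC : forall x y, g x y = g y x)
  (gL : forall (a : C) x y z, g (a *: x + y) z = a * g x z + g y z)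
  (g_nondeg : forall x, (forall y, g x y = 0) -> x = 0).

Lemma metricDl x y z : g (x + y) z = g x z + g y z.
Proof. by rewrite -{1}[x]scale1r gL mul1r. Qed.

Lemma metricDr x y z : g x (y + z) = g x y + g x z.
Proof. by rewrite gC metricDl !(gC x). Qed.

Let metricNl := bimorphNl metricDl.
Let metricNr := bimorphNr metricDr.

Lemma metric0l z : g 0 z = 0.
Proof. exact: (morph_add0 (f := g^~ z) (fun x y => metricDl x y z)). Qed.

Lemma metricZl a x z : g (a *: x) z = a * g x z.
Proof. by rewrite -[a *: x]addr0 gL metric0l addr0. Qed.

Lemma metric_eq u v : (forall w, g u w = g v w) -> u = v.
Proof.
by move=> guv; apply/subr0_eq/g_nondeg => w; rewrite metricDl metricNl guv subrr.
Qed.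

Let metricE := (metricDl, metricNl, metricDr, metricNr, metricZl).

Section TorsionFree.
Variables (br nab : V -> V -> V).
Hypotheses (brN : forall x y, br x y = - br y x)
  (br_jacobi : forall x y z, br x (br y z) + br y (br z x) + br z (br x y) = 0)
  (nabDl : forall x y z, nab (x + y) z = nab x z + nab y z)
  (nabDr : forall x y z, nab x (y + z) = nab x y + nab x z)
  (nab_torsion_free : forall x y, nab x y - nab y x = br x y).

Let nabNl := bimorphNl nabDl.
Let nabNr := bimorphNr nabDr.

Lemma curv4_bianchi x y z w :
  curv4 br g nab x y z w + curv4 br g nab y z x w + curv4 br g nab z x y w = 0.
Proof.
have nab_br a b c : nab (br a b) c = nab c (nab a b) - nab c (nab b a) - br c (br a b).
  rewrite [br c _]brN -(nab_torsion_free (br a b) c) -(nab_torsion_free a b).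
  by apply: metric_eq => u; rewrite !(metricE, nabDr, nabNr); ring.
by rewrite /curv4 /curv !nab_br -(metric0l w) -(br_jacobi x y z)
  !(metricE, nabDr, nabNr); ring.
Qed.

Section Deformation.
Variable Q : V -> V -> V.
Hypotheses (QDl : forall x y z, Q (x + y) z = Q x z + Q y z)
  (QDr : forall x y z, Q x (y + z) = Q x y + Q x z)
  (gQ_skewl : forall x y z, g (Q x y) z = - g (Q y x) z)
  (gQ_skewr : forall x y z, g (Q x y) z = - g (Q x z) y).

Let QNl := bimorphNl QDl.
Let QNr := bimorphNr QDr.

Lemma Q_skew x y : Q y x = - Q x y.
Proof. by apply: metric_eq => w; rewrite metricNl gQ_skewl. Qed.

Lemma metric_QQl a b c d : g (Q (Q a b) c) d = g (Q a b) (Q c d).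
Proof. by rewrite gQ_skewl gQ_skewr opprK gC. Qed.

Lemma metric_QQr a b c d : g (Q a (Q b c)) d = - g (Q b c) (Q a d).
Proof. by rewrite gQ_skewr gC. Qed.

Lemma torsion_deform x y : torsion br (deform nab Q) x y = Q x y *+ 2.
Proof.
rewrite /torsion /deform -nab_torsion_free Q_skew mulr2n.
by apply: metric_eq => w; rewrite !metricE; ring.
Qed.

Lemma nab_Q_torsion_parallel : torsion_parallel br (deform nab Q) -> forall x y z,
  nab x (Q y z) = Q (nab x y) z + Q (Q x y) z + Q y (nab x z) + Q y (Q x z) - Q x (Q y z).
Proof.
move=> parT x y z; apply: metric_eq => w.
have := congr1 (g^~ w) (parT x y z).
rewrite !torsion_deform /deform metric0l.
rewrite !(mulr2n, nabDr, QDl, QDr, nabNr, QNl, QNr, metricE) => E.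
apply: subr0_eq; apply: (@lmod_natmul_eq0 _ C _ 1); ring_from E.
Qed.

Lemma curv4_deform : torsion_parallel br (deform nab Q) -> forall x y z w,
  curv4 br g (deform nab Q) x y z w = curv4 br g nab x y z w
    + g (Q x y) (Q z w) *+ 2 - g (Q x z) (Q y w) + g (Q y z) (Q x w).
Proof.
move=> parT x y z w; rewrite /curv4 /curv /deform -(nab_torsion_free x y).
rewrite !(nabDl, nabNl, nabDr, nabNr, QDl, QNl, QDr, QNr, nab_Q_torsion_parallel parT).
rewrite (Q_skew x y) !(metricE, QNl, metric_QQl, metric_QQr); ring.
Qed.

Lemma curv4_deform_bianchi : torsion_parallel br (deform nab Q) ->
  (forall x y z w, curv4 br g (deform nab Q) x y z w
     + curv4 br g (deform nab Q) y z x w + curv4 br g (deform nab Q) z x y w = 0) ->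
  forall x y z w,
    curv4 br g (deform nab Q) x y z w = curv4 br g nab x y z w + g (Q x y) (Q z w).
Proof.
move=> parT bianchiD x y z w.
have cyclicQQ : g (Q x y) (Q z w) + g (Q y z) (Q x w) + g (Q z x) (Q y w) = 0.
  have := congr2 (fun a b => a - b) (bianchiD x y z w) (curv4_bianchi x y z w).
  rewrite subr0 !(curv4_deform parT) (Q_skew z x) (Q_skew x y) (Q_skew y z) !metricNl => E.
  apply: (@lmod_natmul_eq0 _ C _ 3); ring_from E.
rewrite (curv4_deform parT) (Q_skew z x) metricNl.
apply: subr0_eq; ring_from cyclicQQ.
Qed.

End Deformation.

End TorsionFree.

Section QuasiKaehler.
Variables (der : V -> C -> C) (J : V -> V) (nab : V -> V -> V).
Hypotheses (JD : forall x y, J (x + y) = J x + J y) (JJ : forall x, J (J x) = - x)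
  (gJJ : forall x y, g (J x) (J y) = - g x y)
  (nabDl : forall x y z, nab (x + y) z = nab x z + nab y z)
  (nabDr : forall x y z, nab x (y + z) = nab x y + nab x z)
  (nab_metric : forall x y z, der x (g y z) = g (nab x y) z + g y (nab x z))
  (qK : quasi_Kaehler g J nab).

Local Notation F := (Ften g J nab).

Lemma metricJ u v : g (J u) v = g u (J v).
Proof. by apply: oppr_inj; rewrite -gJJ JJ metricNl. Qed.

Lemma nablaJDl x y z : nablaJ J nab (x + y) z = nablaJ J nab x z + nablaJ J nab y z.
Proof. by apply: metric_eq => w; rewrite /nablaJ !(nabDl, JD, metricE); ring. Qed.

Lemma nablaJDr x y z : nablaJ J nab x (y + z) = nablaJ J nab x y + nablaJ J nab x z.
Proof. by apply: metric_eq => w; rewrite /nablaJ !(JD, nabDr, metricE); ring. Qed.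

Lemma Ften_sym23 x y z : F x y z = F x z y.
Proof.
have := nab_metric x (J y) z; rewrite metricJ nab_metric (gC y) (gC (J y)) => E.
apply: subr0_eq; rewrite /Ften /nablaJ !metricE !metricJ.
ring_from (esym E).
Qed.

Lemma Ften_J x y z : F x (J y) z = - F x y (J z).
Proof. by rewrite /Ften /nablaJ JJ (bimorphNr nabDr) !metricE gJJ !metricJ; ring. Qed.

Let Q4 x y z := F x (J y) z - F (J x) y z - 2%:R * F y (J x) z.

Lemma metric_Qten x y z : g (Qten J nab x y) z = (4%:R^-1 : R)%:A * Q4 x y z.
Proof. by rewrite /Qten /rsc /Q4 /Ften !metricE scaler_nat. Qed.

Lemma QtenDl x y z : Qten J nab (x + y) z = Qten J nab x z + Qten J nab y z.
Proof.
apply: metric_eq => w; rewrite metricDl !metric_Qten /Q4 /Ften.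
by rewrite !(JD, nablaJDl, nablaJDr, metricE); ring.
Qed.

Lemma QtenDr x y z : Qten J nab x (y + z) = Qten J nab x y + Qten J nab x z.
Proof.
apply: metric_eq => w; rewrite metricDl !metric_Qten /Q4 /Ften.
by rewrite !(JD, nablaJDl, nablaJDr, metricE); ring.
Qed.

Lemma metric_Qten_skewl x y z : g (Qten J nab x y) z = - g (Qten J nab y x) z.
Proof.
rewrite !metric_Qten -mulrN; congr (_ * _); apply: subr0_eq.
transitivity (- (F x (J y) z + F (J y) z x + F z x (J y))
              - (F (J x) y z + F y z (J x) + F z (J x) y)).
  by rewrite /Q4 (Ften_sym23 (J y) z x) (Ften_sym23 y z (J x)) (Ften_J z x y); ring.
by rewrite !qK oppr0 addr0.
Qed.

Lemma metric_Qten_skewr x y z : g (Qten J nab x y) z = - g (Qten J nab x z) y.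
Proof.
rewrite !metric_Qten -mulrN; congr (_ * _); apply: subr0_eq.
transitivity (- 2%:R * (F (J x) y z + F y z (J x) + F z (J x) y)).
  by rewrite /Q4 (Ften_J x y z) (Ften_sym23 x (J z) y) (Ften_sym23 (J x) z y)
    (Ften_sym23 y (J x) z); ring.
by rewrite qK mulr0.
Qed.

End QuasiKaehler.

End Metric.

Theorem corollary5p2 (R : realType) (C : comAlgType R) (V : lmodType C)
  (der : V -> C -> C) (br : V -> V -> V) (g : V -> V -> C) (J : V -> V)
  (nabla : V -> V -> V) :
  is_vector_fields der br ->
  is_metric g ->
  is_Norden J g ->
  is_LeviCivita der br g nabla ->
  quasi_Kaehler g J nabla ->
  torsion_parallel br (nablap J nabla) ->
  Kaehler_tensor J (curv4 br g (nablap J nabla)) ->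
  forall x y z w : V,
    curv4 br g (nablap J nabla) x y z w
    = curv4 br g nabla x y z w + g (Qten J nabla x y) (Qten J nabla z w).
Proof.
move=> [_ [_ [_ [_ [_ [brN [br_jacobi _]]]]]]] [gC [gL g_nondeg]] [JL [JJ gJJ]].
move=> [[nablaL [nablaDr _]] [nabla_torsion_free nabla_metric]] qK parT [_ [_ [bianchi _]]].
have JD x y : J (x + y) = J x + J y by rewrite -{1}[x]scale1r JL scale1r.
have nablaDl x y z : nabla (x + y) z = nabla x z + nabla y z.
  by rewrite -{1}[x]scale1r nablaL scale1r.
exact: (curv4_deform_bianchi gC gL g_nondeg brN br_jacobi nablaDl nablaDr
  nabla_torsion_free
  (QtenDl gL g_nondeg JD nablaDl nablaDr) (QtenDr gL g_nondeg JD nablaDl nablaDr)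
  (metric_Qten_skewl gC gL JJ gJJ nablaDr nabla_metric qK)
  (metric_Qten_skewr gC gL JJ gJJ nablaDr nabla_metric qK) parT bianchi).
Qed.
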